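(* Let $X$ be a nonempty compact metric space and $Y\subseteq X$ a dense subset, endowed with the induced metric. Then $d^{us}_{GH}(X,Y)=0$.
   Context: For a metric space, $|xy|$ denotes distance. A set-valued map $f:X\rightrightarrows Y$ assigns to each $x\in X$ a nonempty $f(x)\subseteq Y$ and is identified with its graph. A correspondence between $X$ and $Y$ is a subset $R\subseteq X\times Y$ whose projections to $X$ and to $Y$ are both surjective, regarded as the set-valued map $x\mapsto R(x)=\{y:(x,y)\in R\}$; $R^{-1}=\{(y,x):(x,y)\in R\}$; $\mathcal R(X,Y)$ is the set of all correspondences. The distortion of a nonempty $\sigma\subseteq X\times Y$ is $\operatorname{dis}\sigma=\sup\{||xx'|-|yy'||:(x,y),(x',y')\in\sigma\}\in[0,\infty]$. A set-valued map $f$ is upper semicontinuous if for every $x$ and every open $U\supseteq f(x)$ there is a neighborhood $V$ of $x$ with $f(x')\subseteq U$ for all $x'\in V$. $\mathcal R_{us}(X,Y)$ is the set of $R\in\mathcal R(X,Y)$ with both $R$ and $R^{-1}$ upper semicontinuous, and $d^{us}_{GH}(X,Y)=\frac12\inf\{\operatorname{dis}R:R\in\mathcal R_{us}(X,Y)\}$. *)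

From Stdlib Require Import Reals List.
From Coquelicot Require Import Coquelicot.
Open Scope R_scope.

Definition is_metric {X : Type} (d : X -> X -> R) : Prop :=
  (forall x y, 0 <= d x y) /\
  (forall x y, d x y = 0 <-> x = y) /\
  (forall x y, d x y = d y x) /\
  (forall x y z, d x z <= d x y + d y z).

Definition mopen {X : Type} (d : X -> X -> R) (U : X -> Prop) : Prop :=
  forall x, U x -> exists e, 0 < e /\ forall z, d x z < e -> U z.

Definition mnbhd {X : Type} (d : X -> X -> R) (x : X) (V : X -> Prop) : Prop :=
  exists e, 0 < e /\ forall z, d x z < e -> V z.

Definition mcompact {X : Type} (d : X -> X -> R) : Prop :=
  forall (I : Type) (U : I -> X -> Prop),
    (forall i, mopen d (U i)) -> (forall x, exists i, U i x) ->
    exists l : list I, forall x, exists i, In i l /\ U i x.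

Definition mdense {X : Type} (d : X -> X -> R) (Y : X -> Prop) : Prop :=
  forall x e, 0 < e -> exists y, Y y /\ d x y < e.

Definition induced {X : Type} (d : X -> X -> R) (Y : X -> Prop)
  : {x : X | Y x} -> {x : X | Y x} -> R :=
  fun a b => d (proj1_sig a) (proj1_sig b).

(* Set-valued maps and correspondences, identified with relations (graphs). *)
Definition setvalued {X Y : Type} (f : X -> Y -> Prop) : Prop :=
  forall x, exists y, f x y.

Definition rinv {X Y : Type} (R0 : X -> Y -> Prop) : Y -> X -> Prop :=
  fun y x => R0 x y.

Definition correspondence {X Y : Type} (R0 : X -> Y -> Prop) : Prop :=
  (forall x, exists y, R0 x y) /\ (forall y, exists x, R0 x y).

Definition usc {X Y : Type} (dX : X -> X -> R) (dY : Y -> Y -> R)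
  (f : X -> Y -> Prop) : Prop :=
  forall x (U : Y -> Prop), mopen dY U -> (forall y, f x y -> U y) ->
    exists V, mnbhd dX x V /\ forall x', V x' -> forall y, f x' y -> U y.

(* Distortion of a (nonempty) relation, a value in [0, +oo]. *)
Definition dis {X Y : Type} (dX : X -> X -> R) (dY : Y -> Y -> R)
  (s : X -> Y -> Prop) : Rbar :=
  Rbar_lub (fun r : Rbar => exists x y x' y', s x y /\ s x' y' /\
                 r = Finite (Rabs (dX x x' - dY y y'))).

Definition R_us {X Y : Type} (dX : X -> X -> R) (dY : Y -> Y -> R)
  (R0 : X -> Y -> Prop) : Prop :=
  correspondence R0 /\ usc dX dY R0 /\ usc dY dX (rinv R0).

(* d^us_GH(X,Y) = 1/2 inf { dis R : R in R_us(X,Y) }  (inf of empty set = +oo) *)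
Definition dGH_us {X Y : Type} (dX : X -> X -> R) (dY : Y -> Y -> R) : Rbar :=
  Rbar_mult (Finite (/ 2))
    (Rbar_glb (fun r : Rbar => exists R0, R_us dX dY R0 /\ r = dis dX dY R0)).

From Stdlib Require Import Reals Lra List.
From Coquelicot Require Import Coquelicot.
Open Scope R_scope.

(* Given eps > 0, compactness and density give finitely many centres in Y
   whose eps-balls cover X.  Relate x and y when some centre lies within eps
   of both.  The fibres of this relation are finite unions of closed balls, so
   it is upper semicontinuous in both directions; related points are at most
   2 eps apart, so its distortion is at most 4 eps. *)

Lemma Rbar_lub_spec (E : Rbar -> Prop) : Rbar_is_lub E (Rbar_lub E).
Proof. unfold Rbar_lub; destruct (Rbar_ex_lub E); assumption. Qed.

Lemma Rbar_glb_eq0 (E : Rbar -> Prop) :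
  (forall r, E r -> Rbar_le (Finite 0) r) ->
  (forall eps, 0 < eps -> exists r, E r /\ Rbar_le r (Finite eps)) ->
  Rbar_glb E = Finite 0.
Proof.
  intros Hlow Hsmall; apply Rbar_is_glb_unique; split; [exact Hlow|].
  intros b Hb; destruct b as [b| |]; simpl; try tauto.
  - destruct (Rle_or_lt b 0) as [Hb0|Hb0]; [exact Hb0|].
    destruct (Hsmall (b / 2) ltac:(lra)) as [r [Er Hr]].
    pose proof (Rbar_le_trans _ _ _ (Hb r Er) Hr); simpl in *; lra.
  - destruct (Hsmall 1 Rlt_0_1) as [r [Er Hr]].
    exact (Rbar_le_trans _ _ _ (Hb r Er) Hr).
Qed.

Section Distortion.

Variables (A B : Type) (dA : A -> A -> R) (dB : B -> B -> R) (s : A -> B -> Prop).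

Lemma dis_ge0 a b : s a b -> Rbar_le (Finite 0) (dis dA dB s).
Proof.
  intros Hab; apply (Rbar_le_trans _ (Finite (Rabs (dA a a - dB b b)))).
  - apply Rabs_pos.
  - apply (proj1 (Rbar_lub_spec _)); exists a, b, a, b; auto.
Qed.

Lemma dis_le r :
  (forall a b a' b', s a b -> s a' b' -> Rabs (dA a a' - dB b b') <= r) ->
  Rbar_le (dis dA dB s) (Finite r).
Proof.
  intros Hr; apply (proj2 (Rbar_lub_spec _)).
  intros t [a [b [a' [b' [Hab [Hab' ->]]]]]]; exact (Hr a b a' b' Hab Hab').
Qed.

End Distortion.

Arguments dis_ge0 {A B} dA dB {s a b}.

Lemma usc_of_locally_shrinking {A B : Type} (dA : A -> A -> R) (dB : B -> B -> R)
    (f : A -> B -> Prop) :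
  (forall a, exists e, 0 < e /\ forall a', dA a a' < e -> forall b, f a' b -> f a b) ->
  usc dA dB f.
Proof.
  intros Hshrink a U _ HU; destruct (Hshrink a) as [e [He Ha]].
  exists (fun a' => dA a a' < e); split.
  - exists e; split; auto.
  - intros a' Ha' b Hb; exact (HU b (Ha a' Ha' b Hb)).
Qed.

Section MetricSpace.

Variables (X : Type) (d : X -> X -> R).
Hypothesis d_metric : is_metric d.

Let d_nonneg x y : 0 <= d x y.
Proof. apply d_metric. Qed.

Let d_self x : d x x = 0.
Proof. apply d_metric; reflexivity. Qed.

Let d_sym x y : d x y = d y x.
Proof. apply d_metric. Qed.

Let d_triangle x y z : d x z <= d x y + d y z.
Proof. apply d_metric. Qed.

Lemma dist_diff_le x x' y y' : Rabs (d x x' - d y y') <= d x y + d x' y'.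
Proof.
  pose proof (d_triangle x y x'); pose proof (d_triangle y y' x');
  pose proof (d_triangle y x y'); pose proof (d_triangle x x' y');
  pose proof (d_sym x y); pose proof (d_sym x' y').
  apply Rabs_le; lra.
Qed.

(* The complement of a finite union of closed balls is open. *)
Lemma near_closed_balls (l : list X) (eps : R) (x : X) :
  exists e, 0 < e /\ forall z, d x z < e ->
    forall c, In c l -> d z c <= eps -> d x c <= eps.
Proof.
  induction l as [|c l [e [He IH]]].
  - exists 1; split; [lra|]; intros z _ c [].
  - destruct (Rle_dec (d x c) eps) as [Hc|Hc].
    + exists e; split; [exact He|].
      intros z Hz c' [<-|Hc'] Hzc'; [exact Hc|exact (IH z Hz c' Hc' Hzc')].
    + exists (Rmin e (d x c - eps)); split; [apply Rmin_pos; lra|].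
      intros z Hz c' [<-|Hc'] Hzc'.
      * pose proof (Rmin_r e (d x c - eps)); pose proof (d_triangle x z c); lra.
      * pose proof (Rmin_l e (d x c - eps)); apply (IH z); auto; lra.
Qed.

Lemma compact_dense_net (Y : X -> Prop) (eps : R) :
  mcompact d -> mdense d Y -> 0 < eps ->
  exists l : list X, (forall c, In c l -> Y c) /\
    forall x, exists c, In c l /\ d x c < eps.
Proof.
  intros Hcomp Hdense Heps.
  destruct (Hcomp {y : X | Y y} (fun y x => d (proj1_sig y) x < eps)) as [l Hl].
  - intros y x Hx; exists (eps - d (proj1_sig y) x); split; [lra|].
    intros z Hz; pose proof (d_triangle (proj1_sig y) x z); lra.
  - intros x; destruct (Hdense x eps Heps) as [y [Hy Hxy]].
    exists (exist _ y Hy); simpl; rewrite d_sym; exact Hxy.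
  - exists (map (@proj1_sig _ _) l); split.
    + intros c Hc; apply in_map_iff in Hc as [[y Hy] [<- _]]; exact Hy.
    + intros x; destruct (Hl x) as [y [Hy Hyx]].
      exists (proj1_sig y); split; [now apply in_map|now rewrite d_sym].
Qed.

Definition share_centre (l : list X) (eps : R) (x y : X) : Prop :=
  exists c, In c l /\ d x c <= eps /\ d y c <= eps.

Lemma share_centre_sym l eps x y : share_centre l eps x y -> share_centre l eps y x.
Proof. intros [c [Hc [Hx Hy]]]; exists c; auto. Qed.

Lemma share_centre_locally_shrinking l eps x :
  exists e, 0 < e /\ forall x', d x x' < e -> forall y,
    share_centre l eps x' y -> share_centre l eps x y.
Proof.
  destruct (near_closed_balls l eps x) as [e [He Hnear]].
  exists e; split; [exact He|].
  intros x' Hx' y [c [Hc [Hx'c Hyc]]]; exists c; split; [|split]; auto.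
  exact (Hnear x' Hx' c Hc Hx'c).
Qed.

Lemma share_centre_dist l eps x y : share_centre l eps x y -> d x y <= 2 * eps.
Proof.
  intros [c [_ [Hx Hy]]]; pose proof (d_triangle x c y); rewrite (d_sym c y) in *; lra.
Qed.

Section DenseSubset.

Variable Y : X -> Prop.

Definition net_correspondence (l : list X) (eps : R) (x : X) (y : {y : X | Y y}) : Prop :=
  share_centre l eps x (proj1_sig y).

Lemma net_correspondence_R_us l eps :
  (forall c, In c l -> Y c) -> (forall x, exists c, In c l /\ d x c < eps) ->
  R_us d (induced d Y) (net_correspondence l eps).
Proof.
  intros HlY Hcover; split; [split|split].
  - intros x; destruct (Hcover x) as [c [Hc Hxc]].
    pose proof (d_nonneg x c).
    exists (exist _ c (HlY c Hc)), c; simpl; rewrite d_self; repeat split; auto; lra.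
  - intros [y Hy]; destruct (Hcover y) as [c [Hc Hyc]].
    exists y, c; simpl; repeat split; auto; lra.
  - apply usc_of_locally_shrinking; intros x.
    destruct (share_centre_locally_shrinking l eps x) as [e [He Hx]].
    exists e; split; [exact He|].
    intros x' Hxx' y; apply (Hx x' Hxx').
  - apply usc_of_locally_shrinking; intros [y Hy].
    destruct (share_centre_locally_shrinking l eps y) as [e [He Hy']].
    exists e; split; [exact He|].
    intros [y' ?] Hyy' x Hx; apply share_centre_sym, (Hy' y' Hyy'), share_centre_sym, Hx.
Qed.

Lemma net_correspondence_dis l eps :
  Rbar_le (dis d (induced d Y) (net_correspondence l eps)) (Finite (4 * eps)).
Proof.
  apply dis_le; intros x y x' y' Hxy Hxy'.
  pose proof (share_centre_dist _ _ _ _ Hxy); pose proof (share_centre_dist _ _ _ _ Hxy').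
  pose proof (dist_diff_le x x' (proj1_sig y) (proj1_sig y')); unfold induced; lra.
Qed.

End DenseSubset.

End MetricSpace.

Arguments compact_dense_net {X d} d_metric {Y eps}.
Arguments net_correspondence {X} d Y l eps.
Arguments net_correspondence_R_us {X d} d_metric {Y l eps}.
Arguments net_correspondence_dis {X d} d_metric Y l eps.

Theorem mainTheorem7 (X : Type) (d : X -> X -> R) (Y : X -> Prop) :
  is_metric d -> inhabited X -> mcompact d -> mdense d Y ->
  dGH_us d (induced d Y) = Finite 0.
Proof.
  intros Hmetric [x0] Hcomp Hdense.
  unfold dGH_us; rewrite Rbar_glb_eq0; [simpl; f_equal; ring| |].
  - intros r [R0 [[[Hleft _] _] ->]]; destruct (Hleft x0) as [y Hy].
    exact (dis_ge0 d (induced d Y) Hy).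
  - intros eps Heps.
    destruct (compact_dense_net Hmetric Hcomp Hdense (ltac:(lra) : 0 < eps / 4))
      as [l [HlY Hcover]].
    exists (dis d (induced d Y) (net_correspondence d Y l (eps / 4))); split.
    + exists (net_correspondence d Y l (eps / 4)).
      split; [exact (net_correspondence_R_us Hmetric HlY Hcover)|reflexivity].
    + replace eps with (4 * (eps / 4)) at 2 by field.
      exact (net_correspondence_dis Hmetric Y l (eps / 4)).
Qed.
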